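(* Let $X,Y,Z$ be finite random variables forming a Markov chain $X\leftrightarrow Y\leftrightarrow Z$, let $K_1$ be the Gács–Körner common information of $(X,Y)$ and $K_2$ the Gács–Körner common information of $(X,Z)$. Then $H(K_2\mid K_1)=0$ and $H(K_2)\le H(K_1)$.
   Context: For finite random variables $X,Y$ with (w.l.o.g. disjoint) alphabets, the bipartite representation $\mathcal B_{X,Y}$ is the bipartite graph on $\mathcal X\cup\mathcal Y$ with an edge between $x$ and $y$ iff $p_{X,Y}(x,y)>0$. The Gács–Körner common information $K_{X,Y}$ is the random variable equal to the index of the connected component of $\mathcal B_{X,Y}$ containing $(X,Y)$; equivalently, it maximizes $H(U)$ over all $U$ with $H(U\mid X)=H(U\mid Y)=0$. *)

From HB Require Import structures.
From mathcomp Require Import all_boot all_order all_algebra.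
From mathcomp Require Import reals exp.
Set Implicit Arguments. Unset Strict Implicit. Unset Printing Implicit Defensive.
Import Order.TTheory GRing.Theory Num.Theory.
Local Open Scope ring_scope.

Section Defs.
Variables (R : realType) (Omega : finType).

Definition is_pmf (P : {ffun Omega -> R}) :=
  (forall w, 0 <= P w) /\ \sum_(w : Omega) P w = 1.

Definition pr (P : {ffun Omega -> R}) (E : pred Omega) : R :=
  \sum_(w | E w) P w.

Definition entropy (P : {ffun Omega -> R}) (T : finType) (f : Omega -> T) : R :=
  - \sum_(t : T) pr P (fun w => f w == t) * ln (pr P (fun w => f w == t)).

Definition cond_entropy (P : {ffun Omega -> R}) (T U : finType)
    (f : Omega -> T) (g : Omega -> U) : R :=
  - \sum_(t : T) \sum_(u : U)
      pr P (fun w => (f w == t) && (g w == u)) *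
      ln (pr P (fun w => (f w == t) && (g w == u)) / pr P (fun w => g w == u)).

Definition markov_chain (P : {ffun Omega -> R}) (TX TY TZ : finType)
    (X : Omega -> TX) (Y : Omega -> TY) (Z : Omega -> TZ) :=
  forall x y z,
    pr P (fun w => [&& X w == x, Y w == y & Z w == z]) * pr P (fun w => Y w == y)
    = pr P (fun w => (X w == x) && (Y w == y)) * pr P (fun w => (Y w == y) && (Z w == z)).

Definition bipartite (P : {ffun Omega -> R}) (TX TY : finType)
    (X : Omega -> TX) (Y : Omega -> TY) : rel (TX + TY) :=
  fun u v =>
    match u, v with
    | inl x, inr y => 0 < pr P (fun w => (X w == x) && (Y w == y))
    | inr y, inl x => 0 < pr P (fun w => (X w == x) && (Y w == y))
    | _, _ => false
    end.

(* Gacs-Korner common information: the connected component of B_{X,Y}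
   containing (X, Y) (labelled by the component itself, as a vertex set;
   we use the vertex X, which lies in the same component as Y whenever
   the outcome has positive probability). *)
Definition gk (P : {ffun Omega -> R}) (TX TY : finType)
    (X : Omega -> TX) (Y : Omega -> TY) : Omega -> {set (TX + TY)} :=
  fun w => [set v | connect (bipartite P X Y) (inl (X w)) v].

End Defs.

(** The Markov chain lets every path of the bipartite graph B_{X,Y} be shadowed
    in B_{X,Z}: two values x, x' adjacent to a common y with p(y) > 0 share a
    common z, because p(x,y) > 0 and p(y,z) > 0 force p(x,y,z) > 0.  Hence
    each component of B_{X,Y} lies inside a component of B_{X,Z}, i.e. K_2 is
    a function of K_1, and a function of a random variable has no conditional
    entropy given it and no more entropy than it. *)
From HB Require Import structures.
From mathcomp Require Import all_boot all_order all_algebra.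
From mathcomp Require Import reals exp.
Set Implicit Arguments. Unset Strict Implicit. Unset Printing Implicit Defensive.
Import Order.TTheory GRing.Theory Num.Theory.
Local Open Scope ring_scope.

Section Probability.
Variables (R : realType) (Omega : finType) (P : {ffun Omega -> R}).
Hypothesis P_ge0 : forall w, 0 <= P w.

Lemma pr_ge0 (E : pred Omega) : 0 <= pr P E.
Proof. exact: sumr_ge0. Qed.

Lemma le_pr (E F : pred Omega) : (forall w, E w -> F w) -> pr P E <= pr P F.
Proof.
move=> EF; rewrite /pr [leLHS]big_mkcond [leRHS]big_mkcond.
apply: ler_sum => w _; case: (boolP (E w)) => [/EF -> //|_].
by case: (F w).
Qed.

Lemma pr_partition (U : finType) (h : Omega -> U) (E : pred Omega) :
  \sum_(u : U) pr P (fun w => E w && (h w == u)) = pr P E.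
Proof.
rewrite /pr; under eq_bigr => u _ do rewrite big_mkcond.
rewrite exchange_big [RHS]big_mkcond /=; apply: eq_bigr => w _.
rewrite (bigD1 (h w)) //= eqxx andbT big1 ?addr0 // => u /negbTE hu.
by rewrite eq_sym hu andbF.
Qed.

Lemma pr_gt0_refine (U : finType) (h : Omega -> U) (E : pred Omega) :
  0 < pr P E -> exists u, 0 < pr P (fun w => E w && (h w == u)).
Proof.
rewrite -(pr_partition h) => /lt0r_neq0.
rewrite psumr_neq0 => [/hasP[u _ /andP[_ pos]]|u _]; last exact: pr_ge0.
by exists u.
Qed.

Definition determined_by (T U : finType) (f : Omega -> T) (h : Omega -> U) :=
  forall w w', h w = h w' -> f w = f w'.

Section Determined.
Variables (T U : finType) (f : Omega -> T) (h : Omega -> U).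
Hypothesis f_of_h : determined_by f h.

Lemma pr_joint_determined t u :
  pr P (fun w => (f w == t) && (h w == u)) = 0 \/
  pr P (fun w => (f w == t) && (h w == u)) = pr P (fun w => h w == u).
Proof.
case: (pickP (fun w => h w == u)) => [w0 /eqP hw0|no_u]; last first.
  by left; apply: big1 => w /andP[_]; rewrite no_u.
have [ft|nft] := eqVneq (f w0) t.
  right; apply: eq_bigl => w /=.
  case: (boolP (h w == u)) => [/eqP hw|]; last by rewrite andbF.
  by rewrite (@f_of_h w w0) ?ft ?eqxx // hw hw0.
left; apply: big1 => w /andP[/eqP fw /eqP hw].
by move: nft; rewrite -fw (@f_of_h w0 w) ?eqxx // hw hw0.
Qed.

Lemma cond_entropy_determined : cond_entropy P f h = 0.
Proof.
rewrite /cond_entropy big1 ?oppr0 // => t _; apply: big1 => u _.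
case: (pr_joint_determined t u) => ->; first by rewrite mul0r.
have [->|nz] := eqVneq (pr P (fun w => h w == u)) 0; first by rewrite mul0r.
by rewrite divff // ln1 mulr0.
Qed.

(* Refining f by h only splits its atoms, which can only lower p ln p; the
   atoms of the refinement are exactly those of h since f is a function of h. *)
Lemma entropy_determined_le : entropy P f <= entropy P h.
Proof.
rewrite /entropy lerN2.
pose plnp (E : pred Omega) := pr P E * ln (pr P E).
have -> : \sum_(u : U) plnp (fun w => h w == u) =
          \sum_(t : T) \sum_(u : U) plnp (fun w => (f w == t) && (h w == u)).
  rewrite exchange_big /=; apply: eq_bigr => u _.
  rewrite /plnp -[X in X * _](pr_partition f (fun w => h w == u)) mulr_suml.
  apply: eq_bigr => t _.
  have -> : pr P (fun w => (h w == u) && (f w == t)) =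
            pr P (fun w => (f w == t) && (h w == u)).
    by apply: eq_bigl => w; rewrite andbC.
  by case: (pr_joint_determined t u) => ->; rewrite ?mul0r.
apply: ler_sum => t _.
rewrite /plnp -[X in _ <= X * _](pr_partition h (fun w => f w == t)) mulr_suml.
apply: ler_sum => u _.
set a := pr P _; set b := pr P _.
have ab : a <= b by apply: le_pr => w /andP[].
have [->|a_neq0] := eqVneq a 0; first by rewrite !mul0r.
have a_gt0 : 0 < a by rewrite lt0r a_neq0 pr_ge0.
by rewrite ler_wpM2l ?pr_ge0 // ler_ln ?posrE // (lt_le_trans a_gt0).
Qed.

End Determined.
End Probability.

Section CommonInformation.
Variables (R : realType) (Omega : finType) (P : {ffun Omega -> R}).
Variables (TX TY TZ : finType) (X : Omega -> TX) (Y : Omega -> TY) (Z : Omega -> TZ).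

Lemma bipartite_sym (TB : finType) (B : Omega -> TB) : symmetric (bipartite P X B).
Proof. by move=> [a|a] [b|b]. Qed.

Lemma gk_eq (TB : finType) (B : Omega -> TB) w w' :
  connect (bipartite P X B) (inl (X w)) (inl (X w')) -> gk P X B w = gk P X B w'.
Proof.
move=> c; apply/setP => v; rewrite !inE.
exact: (same_connect (sym_connect_sym (bipartite_sym B)) c).
Qed.

Lemma gk_eq_connect (TB : finType) (B : Omega -> TB) w w' :
  gk P X B w = gk P X B w' -> connect (bipartite P X B) (inl (X w)) (inl (X w')).
Proof.
move=> e; have : inl (X w') \in gk P X B w' by rewrite inE connect0.
by rewrite -e inE.
Qed.

Hypothesis P_ge0 : forall w, 0 <= P w.
Hypothesis XYZ_markov : markov_chain P X Y Z.

Lemma markov_pr_gt0 x y z :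
  0 < pr P (fun w => (X w == x) && (Y w == y)) ->
  0 < pr P (fun w => (Y w == y) && (Z w == z)) ->
  0 < pr P (fun w => (X w == x) && (Z w == z)).
Proof.
move=> pxy pyz.
have pxyz_neq0 : pr P (fun w => [&& X w == x, Y w == y & Z w == z]) != 0.
  apply/eqP => pxyz0; move: (XYZ_markov x y z).
  by rewrite pxyz0 mul0r => /esym/eqP; rewrite mulf_eq0 !gt_eqF.
have pxyz : 0 < pr P (fun w => [&& X w == x, Y w == y & Z w == z]).
  by rewrite lt0r pxyz_neq0 pr_ge0.
by apply: (lt_le_trans pxyz); apply: le_pr => // w /and3P[-> _ ->].
Qed.

Lemma connect_XZ_common_y x x' y :
  0 < pr P (fun w => (X w == x) && (Y w == y)) ->
  0 < pr P (fun w => (X w == x') && (Y w == y)) ->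
  connect (bipartite P X Z) (inl x) (inl x').
Proof.
move=> pxy px'y.
have py : 0 < pr P (fun w => Y w == y).
  by apply: (lt_le_trans pxy); apply: le_pr => // w /andP[].
have [z pyz] := pr_gt0_refine P_ge0 Z py.
apply: (connect_trans (y := inr z)); apply: connect1 => /=.
  exact: markov_pr_gt0 pxy pyz.
exact: markov_pr_gt0 px'y pyz.
Qed.

(* S marks the x1 joined to x in B_{X,Z}, and the y1 having such an x1 as
   neighbour in B_{X,Y}; it is closed under B_{X,Y}, hence contains the
   component of x. *)
Lemma connect_XY_connect_XZ x x' :
  connect (bipartite P X Y) (inl x) (inl x') ->
  connect (bipartite P X Z) (inl x) (inl x').
Proof.
pose reached x1 := connect (bipartite P X Z) (inl x) (inl x1).
pose S (v : TX + TY) := match v with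
  | inl x1 => reached x1
  | inr y1 => [exists x1, (0 < pr P (fun w => (X w == x1) && (Y w == y1)))
                          && reached x1]
  end.
have S_edge x1 y1 : 0 < pr P (fun w => (X w == x1) && (Y w == y1)) ->
    S (inl x1) = S (inr y1).
  move=> p1 /=; apply/idP/existsP => [rx1|[x2 /andP[p2 rx2]]].
    by exists x1; rewrite p1.
  exact: connect_trans rx2 (connect_XZ_common_y p2 p1).
have S_closed : closed (bipartite P X Y) S.
  move=> [a|a] [b|b] //= ab; rewrite /in_mem /=; first exact: S_edge.
  exact: esym (S_edge _ _ ab).
move=> /(closed_connect S_closed); rewrite /in_mem /= /reached connect0.
by move=> /esym.
Qed.

Lemma gk_XZ_determined_by_gk_XY : determined_by (gk P X Z) (gk P X Y).
Proof.
by move=> w w' /gk_eq_connect /connect_XY_connect_XZ /gk_eq.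
Qed.

End CommonInformation.

Theorem corollary1 (R : realType) (Omega : finType) (P : {ffun Omega -> R})
    (TX TY TZ : finType) (X : Omega -> TX) (Y : Omega -> TY) (Z : Omega -> TZ) :
  is_pmf P ->
  markov_chain P X Y Z ->
  cond_entropy P (gk P X Z) (gk P X Y) = 0 /\
  entropy P (gk P X Z) <= entropy P (gk P X Y).
Proof.
move=> [P_ge0 _] XYZ_markov.
have K2_of_K1 := gk_XZ_determined_by_gk_XY P_ge0 XYZ_markov.
split; first exact: cond_entropy_determined.
exact: entropy_determined_le.
Qed.
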